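(* Let $\vec{\alpha}=\langle\alpha_s:s\in[\mathbb{N}]^{<\infty}\rangle$ be a sequence of nonstandard hypernatural numbers. The collection of $\vec{\alpha}$-Ramsey null subsets of $[\mathbb{N}]^\infty$ is a $\sigma$-ideal: it contains $\emptyset$, is closed under subsets, and is closed under countable unions.
   Context: Setting (Alpha-Theory of Benci–Di Nasso): ZFC together with a new symbol $\alpha$ satisfying: ($\alpha$1) every sequence $\varphi=\langle\varphi_i:i\in\mathbb{N}\rangle$ has a unique ideal value $\varphi[\alpha]$; ($\alpha$2) if $\varphi[\alpha]=\psi[\alpha]$ and $f\circ\varphi$, $f\circ\psi$ make sense then $(f\circ\varphi)[\alpha]=(f\circ\psi)[\alpha]$; ($\alpha$3) constant real sequences $r$ have ideal value $r$, and $\langle i\rangle$ has ideal value $\alpha\notin\mathbb{N}$; ($\alpha$4) if $\vartheta_i=\{\varphi_i,\psi_i\}$ then $\vartheta[\alpha]=\{\varphi[\alpha],\psi[\alpha]\}$; ($\alpha$5) the constant sequence $\emptyset$ has ideal value $\emptyset$, and for nonempty $\psi_i$, $\psi[\alpha]=\{\vartheta[\alpha]:\vartheta_i\in\psi_i\ \forall i\}$. ${}^*A$ is the ideal value of the constant sequence $A$; elements of ${}^*\mathbb{N}\setminus\mathbb{N}$ are nonstandard hypernatural numbers. For finite $s$, $s\sqsubseteq X$ means $s=\{j\in X:j\le i\}$ for some $i$. A tree on $\mathbb{N}$ is a nonempty $T\subseteq[\mathbb{N}]^{<\infty}$ closed under $\sqsubseteq$-initial segments; $[T]=\{X\in[\mathbb{N}]^\infty:$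 every finite $s\sqsubseteq X$ is in $T\}$; stem $st(T)$ = $\sqsubseteq$-maximal $s\in T$ comparable with all elements of $T$; $T/s=\{t\in T:s\sqsubseteq t\}$. An $\vec{\alpha}$-tree is a tree $T$ with a stem, $T/st(T)\neq\emptyset$, and $s\cup\{\alpha_s\}\in{}^*T$ for all $s\in T/st(T)$. $\mathcal{X}\subseteq[\mathbb{N}]^\infty$ is $\vec{\alpha}$-Ramsey null if for every $\vec{\alpha}$-tree $T$ there is an $\vec{\alpha}$-tree $S\subseteq T$ with $st(S)=st(T)$ and $[S]\cap\mathcal{X}=\emptyset$. *)

From mathcomp Require Import all_boot.
From mathcomp Require Import boolp classical_sets cardinality.
Set Implicit Arguments. Unset Strict Implicit. Unset Printing Implicit Defensive.
Local Open Scope classical_set_scope.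

(* The ideal value of a sequence is its class in the ultrapower nat^nat/U, where
   U = {A : alpha \in *A} is a nonprincipal ultrafilter on nat. *)
Definition ultrafilter_on_nat (U : set (set nat)) : Prop :=
  [/\ U setT, ~ U set0,
      (forall A B, A `<=` B -> U A -> U B),
      (forall A B, U A -> U B -> U (A `&` B)) &
      (forall A, U A \/ U (~` A))].

Definition nonprincipal (U : set (set nat)) : Prop := forall n : nat, ~ U [set n].

(* A hypernatural number is the ideal value f[alpha] of f : nat -> nat;
   it is nonstandard iff it differs from every standard n, i.e.
   {i | f i = n} \notin U for all n. *)
Definition nonstandard (U : set (set nat)) (f : nat -> nat) : Prop :=
  forall n : nat, ~ U [set i | f i = n].

Definition init_seg (s X : set nat) : Prop :=
  exists i : nat, s = [set j | X j /\ (j < i)%N].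

Definition is_tree (T : set (set nat)) : Prop :=
  [/\ T !=set0,
      (forall s, T s -> finite_set s) &
      (forall s t, T t -> init_seg s t -> T s)].

Definition body (T : set (set nat)) : set (set nat) :=
  [set X | infinite_set X /\ (forall s, finite_set s -> init_seg s X -> T s)].

Definition comparable_all (T : set (set nat)) (s : set nat) : Prop :=
  forall t, T t -> init_seg s t \/ init_seg t s.

Definition is_stem (T : set (set nat)) (s : set nat) : Prop :=
  [/\ T s, comparable_all T s &
      (forall s', T s' -> comparable_all T s' -> init_seg s s' -> s' = s)].

Definition tree_above (T : set (set nat)) (s : set nat) : set (set nat) :=
  [set t | T t /\ init_seg s t].

(* An alpha-tree with stem st, where alpha_s = (phi s)[alpha]:
   "s U {alpha_s} \in *T" is {i | T (s U {phi s i})} \in U. *)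
Definition alpha_tree_stem (U : set (set nat)) (phi : set nat -> nat -> nat)
    (T : set (set nat)) (st : set nat) : Prop :=
  [/\ is_tree T, is_stem T st, tree_above T st !=set0 &
      (forall s, tree_above T st s -> U [set i | T (s `|` [set phi s i])])].

Definition alpha_ramsey_null (U : set (set nat)) (phi : set nat -> nat -> nat)
    (X : set (set nat)) : Prop :=
  forall T st, alpha_tree_stem U phi T st ->
    exists S, [/\ alpha_tree_stem U phi S st, S `<=` T & body S `&` X = set0].

From mathcomp Require Import all_boot.
From mathcomp Require Import boolp classical_sets cardinality.
Set Implicit Arguments. Unset Strict Implicit. Unset Printing Implicit Defensive.
Local Open Scope classical_set_scope.

(* Closure under subsets and finite unions is immediate: to avoid A and B,
   prune first for A and then prune the result for B.  For a countable union
   of null sets F n, the partial unions F 0 U ... U F n are null, and we fuse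
   the prunings.  Along a node u above the stem, stage i of the construction
   is the current tree, pruned (when i is an element of u above the stem)
   below the new stem u /\ [0, i] so that its body avoids F 0 U ... U F i.
   Stage i depends only on u /\ [0, i), so the nodes lying in every stage of
   their own construction form a tree; it has the original stem and is an
   alpha-tree because U contains both the successor set of s in the relevant
   stage and the set where alpha_s exceeds max s.  A branch X of it runs
   through stage i + 1 of its own initial segment for some i in X above n
   and the stem, hence X is not in F n. *)

Definition prefix (X : set nat) (i : nat) : set nat := [set j | X j /\ (j < i)%N].

Lemma prefix_prefix X i j : prefix (prefix X i) j = prefix X (minn i j).
Proof.
apply/seteqP; split => x /=; rewrite /prefix /= leq_min.
  by move=> [[Xx xi] xj]; rewrite xi xj.
by move=> [Xx /andP[xi xj]].
Qed.

Lemma prefix_prefix_le X i j : (j <= i)%N -> prefix (prefix X i) j = prefix X j.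
Proof. by move=> ji; rewrite prefix_prefix (minn_idPr ji). Qed.

Lemma prefix_id s N : (forall x, s x -> (x < N)%N) -> prefix s N = s.
Proof. by move=> sN; apply/seteqP; split => x; [case | split => //; apply: sN]. Qed.

Lemma finite_prefix X i : finite_set (prefix X i).
Proof. by apply: (sub_finite_set _ (finite_II i)) => x []. Qed.

Lemma init_seg_prefix X i : init_seg (prefix X i) X.
Proof. by exists i. Qed.

Lemma init_seg_prefix_le X i j : (i <= j)%N -> init_seg (prefix X i) (prefix X j).
Proof. by move=> ij; exists i; rewrite -/(prefix _ i) prefix_prefix_le. Qed.

Lemma init_seg_sub s X : init_seg s X -> s `<=` X.
Proof. by move=> [i ->] x []. Qed.

Lemma init_seg_trans s t X : init_seg s t -> init_seg t X -> init_seg s X.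
Proof.
move=> [i ->] [j ->]; exists (minn j i).
by rewrite -/(prefix X j) -/(prefix (prefix X j) i) prefix_prefix.
Qed.

Lemma init_seg_total s t X : init_seg s X -> init_seg t X ->
  init_seg s t \/ init_seg t s.
Proof.
move=> [i ->] [j ->]; rewrite -/(prefix X i) -/(prefix X j).
by case: (leqP i j) => [ij|/ltnW ji]; [left|right]; apply: init_seg_prefix_le.
Qed.

Lemma finite_bounded s : finite_set s -> exists N, forall x, s x -> (x < N)%N.
Proof.
move/finite_seqP => [l ->].
elim: l => [|a l [N HN]]; first by exists 0%N.
exists (maxn a.+1 N) => x /=; rewrite in_cons => /orP[/eqP ->|xl].
  by rewrite leq_max leqnn.
by rewrite leq_max (HN x xl) orbT.
Qed.

Lemma infinite_unbounded X N : infinite_set X -> exists x, X x /\ (N <= x)%N.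
Proof.
move=> infX; apply: contrapT => noX; apply: infX.
apply: (sub_finite_set _ (finite_II N)) => x Xx /=.
by rewrite ltnNge; apply/negP => Nx; apply: noX; exists x.
Qed.

Lemma init_seg_refl s : finite_set s -> init_seg s s.
Proof. by move=> /finite_bounded [N sN]; exists N; rewrite -/(prefix s N) prefix_id. Qed.

Lemma init_seg_of_sub s t X : init_seg s X -> init_seg t X -> s `<=` t ->
  init_seg s t.
Proof.
move=> sX tX st; case: (init_seg_total sX tX) => // /init_seg_sub ts.
have -> : s = t by apply/seteqP.
by case: tX => j ->; apply/init_seg_refl/finite_prefix.
Qed.

Lemma init_seg_setU1 s t x N : init_seg s t -> (forall y, t y -> (y < N)%N) ->
  (N <= x)%N -> init_seg s (t `|` [set x]).
Proof.
move=> [j ->] tN Nx; exists (minn j N); apply/seteqP; split => y /=.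
  by move=> [ty yj]; split; [left|rewrite leq_min yj tN].
rewrite leq_min => -[[ty|->] /andP[yj yN]] //.
by move: (leq_trans yN Nx); rewrite ltnn.
Qed.

Section Ultrafilter.
Variable U : set (set nat).
Hypothesis hU : ultrafilter_on_nat U.

Lemma ultraS A B : A `<=` B -> U A -> U B.
Proof. by case: hU => _ _ + _ _; apply. Qed.

Lemma ultraI A B : U A -> U B -> U (A `&` B).
Proof. by case: hU => _ _ _ + _; apply. Qed.

Lemma ultra_neq0 A : U A -> A !=set0.
Proof.
move=> UA; apply/set0P/negP => /eqP A0.
by case: hU => _ + _ _ _; rewrite -A0.
Qed.

Lemma ultraUr A B : U (A `|` B) -> ~ U A -> U B.
Proof.
move=> UAB nUA; case: hU => _ _ _ _ /(_ A) [//|UCA].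
by apply: ultraS (ultraI UAB UCA) => x [[]].
Qed.

Lemma nonstandard_ge f N : nonstandard U f -> U [set i | (N <= f i)%N].
Proof.
move=> nsf; elim: N => [|N UN].
  by case: hU => UT _ _ _ _; apply: ultraS UT => x.
apply: (ultraUr (A := [set i | f i = N])); last exact: nsf.
by apply: ultraS UN => x /=; rewrite leq_eqVlt => /orP[/eqP ->|]; [left|right].
Qed.

End Ultrafilter.

Section AlphaTrees.
Variable U : set (set nat).
Variable phi : set nat -> nat -> nat.
Hypothesis hU : ultrafilter_on_nat U.
Hypothesis hphi : forall s : set nat, finite_set s -> nonstandard U (phi s).

Lemma ultra_phi_ge s A N : finite_set s -> U A ->
  exists2 i, A i & (N <= phi s i)%N.
Proof.
move=> fs UA; have [i [Ai Ni]] := ultra_neq0 hU (ultraI hU UA (nonstandard_ge hU N (hphi fs))).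
by exists i.
Qed.

Lemma two_successors T s : is_tree T -> T s ->
  U [set i | T (s `|` [set phi s i])] ->
  exists a b, [/\ (a < b)%N, ~ s a, ~ s b, T (s `|` [set a]) & T (s `|` [set b])].
Proof.
move=> [_ finT _] Ts UA; have fs := finT _ Ts.
have [N sN] := finite_bounded fs.
have [i Ai Ni] := ultra_phi_ge N fs UA.
have [j Aj ij] := ultra_phi_ge (phi s i).+1 fs UA.
exists (phi s i), (phi s j); split => // [/sN|/sN]; rewrite ltnNge.
- by rewrite Ni.
- by rewrite (leq_trans Ni (ltnW ij)).
Qed.

Lemma successor_mem s t x a : t x -> ~ s x ->
  init_seg t (s `|` [set a]) \/ init_seg (s `|` [set a]) t -> t a.
Proof.
move=> tx nsx [/init_seg_sub tsa|/init_seg_sub sat]; last by apply: sat; right.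
by case: (tsa x tx) => // <-.
Qed.

Lemma alpha_tree_stem_intro T s : is_tree T -> T s -> comparable_all T s ->
  (forall t, tree_above T s t -> U [set i | T (t `|` [set phi t i])]) ->
  alpha_tree_stem U phi T s.
Proof.
move=> treeT Ts cmps succ.
have ss : init_seg s s by apply: init_seg_refl; case: treeT => _ + _; apply.
split => //; last by exists s.
split => // t Tt cmpt st; apply/seteqP; split; last exact: init_seg_sub.
have [a [b [ab nsa nsb Ta Tb]]] := two_successors treeT Ts (succ _ (conj Ts ss)).
move=> x tx; apply: contrapT => nsx.
have ta := successor_mem tx nsx (cmpt _ Ta).
have nab : a <> b by move=> eab; move: ab; rewrite eab ltnn.
case: (cmpt _ Tb) => [/init_seg_sub/(_ a ta) []//|[i eb]].
rewrite -/(prefix t i) in eb.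
have [_ bi] : prefix t i b by rewrite -eb; right.
have : prefix t i a by split => //; apply: ltn_trans ab bi.
by rewrite -eb => -[].
Qed.

Lemma body_subset S T : S `<=` T -> body S `<=` body T.
Proof. by move=> ST X [infX SX]; split => // s fs sX; apply/ST/SX. Qed.

Lemma alpha_null_setU A B C : alpha_ramsey_null U phi A ->
  alpha_ramsey_null U phi B -> C `<=` A `|` B -> alpha_ramsey_null U phi C.
Proof.
move=> nullA nullB CAB T s aT.
have [S1 [aS1 S1T S1A]] := nullA T s aT.
have [S2 [aS2 S2S1 S2B]] := nullB S1 s aS1.
exists S2; split => //; first by move=> t /S2S1/S1T.
apply/seteqP; split => // X [S2X /CAB [AX|BX]].
- by rewrite -S1A; split => //; apply: body_subset S2X.
- by rewrite -S2B.
Qed.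

Lemma alpha_null_set0 : alpha_ramsey_null U phi set0.
Proof. by move=> T s aT; exists T; split => //; apply: setI0. Qed.

Lemma alpha_null_sub A B : B `<=` A -> alpha_ramsey_null U phi A ->
  alpha_ramsey_null U phi B.
Proof.
by move=> BA nullA; apply: alpha_null_setU nullA alpha_null_set0 _ => X /BA; left.
Qed.

Definition tree_through (T : set (set nat)) (v : set nat) : set (set nat) :=
  [set t | T t /\ (init_seg v t \/ init_seg t v)].

Lemma alpha_tree_through T s v : alpha_tree_stem U phi T s -> tree_above T s v ->
  alpha_tree_stem U phi (tree_through T v) v.
Proof.
move=> [[_ finT closT] _ _ succ] [Tv sv].
have vv := init_seg_refl (finT _ Tv).
apply: alpha_tree_stem_intro => //; last 2 first.
- by move=> t [].
- move=> t [[Tt _] vt]; have ft := finT _ Tt.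
  have [N tN] := finite_bounded ft.
  have UA := ultraI hU (succ t (conj Tt (init_seg_trans sv vt)))
                       (nonstandard_ge hU N (hphi ft)).
  apply: ultraS hU _ _ _ UA => i [Ti Ni].
  by split => //; left; apply: init_seg_setU1 vt tN Ni.
- split; first by exists v; split => //; left.
  + by move=> t [/finT].
  + move=> t u [Tu cu] tu; split; first exact: closT tu.
    case: cu => [vu|uv]; first exact: init_seg_total vu tu.
    by right; apply: init_seg_trans tu uv.
- by split => //; left.
Qed.

End AlphaTrees.

Section Fusion.
Variable U : set (set nat).
Variable phi : set nat -> nat -> nat.
Hypothesis hU : ultrafilter_on_nat U.
Hypothesis hphi : forall s : set nat, finite_set s -> nonstandard U (phi s).
Variable F : nat -> set (set nat).
Hypothesis nullF : forall n, alpha_ramsey_null U phi (F n).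

Definition partial_union n := \bigcup_(k in [set k | (k <= n)%N]) F k.

Lemma alpha_null_partial_union n : alpha_ramsey_null U phi (partial_union n).
Proof.
elim: n => [|n IH].
  by apply: alpha_null_sub (nullF 0) => X [k /=]; rewrite leqn0 => /eqP ->.
apply: alpha_null_setU IH (nullF n.+1) _ => X [k /= kn FkX].
move: kn; rewrite leq_eqVlt => /orP[/eqP ek|kn]; first by right; rewrite -ek.
by left; exists k.
Qed.

Definition pruning n R v S :=
  [/\ alpha_tree_stem U phi S v, S `<=` R & body S `&` partial_union n = set0].

Definition prune n R v : set (set nat) :=
  match pselect (exists S, pruning n R v S) with
  | left h => projT1 (cid h)
  | right _ => R
  end.

Lemma pruneP n R v : (exists S, pruning n R v S) -> pruning n R v (prune n R v).
Proof. by rewrite /prune; case: pselect => // h _; apply: (projT2 (cid h)). Qed.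

Lemma prune_sub n R v : prune n R v `<=` R.
Proof. by rewrite /prune; case: pselect => [h|_ t //]; case: (projT2 (cid h)). Qed.

Lemma prune_tree n R v : is_tree R -> is_tree (prune n R v).
Proof. by rewrite /prune; case: pselect => [h _|//]; case: (projT2 (cid h)) => -[]. Qed.

Lemma exists_pruning n R s v : alpha_tree_stem U phi R s -> tree_above R s v ->
  exists S, pruning n R v S.
Proof.
move=> aR Rsv.
have [S [aS Sthrough Sn]] := alpha_null_partial_union n (alpha_tree_through hU hphi aR Rsv).
by exists S; split => // t /Sthrough [].
Qed.

Section FusionTree.
Variables (T : set (set nat)) (st : set nat).
Hypothesis aT : alpha_tree_stem U phi T st.

Let treeT : is_tree T. Proof. by case: aT. Qed.
Let Tst : T st. Proof. by case: aT => _ []. Qed.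
Let finite_stem : finite_set st. Proof. by case: treeT => _ + _; apply. Qed.

Definition above_stem u i := u i /\ st `<=` prefix u i.

Fixpoint fuse (u : set nat) (i : nat) : set (set nat) :=
  match i with
  | 0 => prune 0 T st
  | i.+1 => if `[< above_stem u i >] then prune i (fuse u i) (prefix u i.+1)
            else fuse u i
  end.

Lemma fuse0_alpha u : alpha_tree_stem U phi (fuse u 0) st.
Proof.
by case: (pruneP (exists_pruning 0 aT (conj Tst (init_seg_refl finite_stem)))).
Qed.

Lemma fuse_tree u i : is_tree (fuse u i).
Proof.
elim: i => [|i IH] /=; first exact: prune_tree.
by case: asboolP => // _; apply: prune_tree.
Qed.

Lemma fuse_subS u i : fuse u i.+1 `<=` fuse u i.
Proof. by rewrite /=; case: asboolP => _; [apply: prune_sub | apply: subset_refl]. Qed.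

Lemma fuse_sub u i j : (i <= j)%N -> fuse u j `<=` fuse u i.
Proof.
elim: j => [|j IH]; first by rewrite leqn0 => /eqP ->.
rewrite leq_eqVlt => /orP[/eqP ->//|ij] t /fuse_subS; exact: IH.
Qed.

Lemma fuse_sub_tree u i : fuse u i `<=` T.
Proof. by move=> t /(fuse_sub (leq0n i)); apply: prune_sub. Qed.

Lemma eq_fuse u u' i : prefix u i = prefix u' i -> fuse u i = fuse u' i.
Proof.
elim: i => [//|i IH] eu /=.
have ei : prefix u i = prefix u' i.
  by rewrite -(@prefix_prefix_le u i.+1 i) // -(@prefix_prefix_le u' i.+1 i) // eu.
have mem_i a b : prefix a i.+1 = prefix b i.+1 -> a i -> b i.
  by move=> eab ai; have : prefix a i.+1 i by []; rewrite eab => -[].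
have -> : above_stem u i = above_stem u' i.
  by rewrite /above_stem ei (propext (conj (mem_i _ _ eu) (mem_i _ _ (esym eu)))).
by rewrite IH // eu.
Qed.

Lemma fuse_prefix u i j : (i <= j)%N -> fuse (prefix u j) i = fuse u i.
Proof. by move=> ij; apply: eq_fuse; rewrite prefix_prefix_le. Qed.

Lemma fuse_bounded u i j : (forall x, u x -> (x < i)%N) -> (i <= j)%N ->
  fuse u j = fuse u i.
Proof.
move=> ui; elim: j => [|j IH]; first by rewrite leqn0 => /eqP ->.
rewrite leq_eqVlt => /orP[/eqP ->//|ij] /=.
rewrite asboolF ?IH // => -[/ui uj _].
by move: (leq_trans uj ij); rewrite ltnn.
Qed.

Lemma fuse_stem i : fuse st i = fuse st 0.
Proof.
elim: i => [//|i IH] /=; rewrite asboolF // => -[sti /(_ i sti) [_]].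
by rewrite ltnn.
Qed.

Lemma fuse_prunable u i w : init_seg st u -> fuse u i u -> above_stem u i ->
  alpha_tree_stem U phi (fuse u i) w -> w = st \/ init_seg w (prefix u i) ->
  exists S, pruning i (fuse u i) (prefix u i.+1) S.
Proof.
move=> stu fu [ui stui] aw w_st.
have [_ _ closF] := fuse_tree u i.
have st_u' : init_seg st (prefix u i.+1).
  apply: init_seg_of_sub stu (init_seg_prefix u i.+1) _ => x /stui [ux xi].
  by split => //; apply: ltnW.
apply: (exists_pruning i aw); split; first exact: closF fu (init_seg_prefix u i.+1).
case: w_st => [->//|wi].
exact: init_seg_trans wi (init_seg_prefix_le u (leqnSn i)).
Qed.

Lemma fuse_alpha u i : init_seg st u -> (forall j, (j < i)%N -> fuse u j u) ->
  exists2 w, alpha_tree_stem U phi (fuse u i) w & w = st \/ init_seg w (prefix u i).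
Proof.
move=> stu; elim: i => [|i IH] fu.
  by exists st; [apply: fuse0_alpha | left].
have [w aw w_st] := IH (fun j ji => fu j (ltnW ji)).
rewrite /=; case: asboolP => [abi|_].
  have [aS _ _] := pruneP (fuse_prunable stu (fu i (ltnSn i)) abi aw w_st).
  by exists (prefix u i.+1) => //; right; apply/init_seg_refl/finite_prefix.
exists w => //; case: w_st => [|wi]; [left|right] => //.
exact: init_seg_trans wi (init_seg_prefix_le u (leqnSn i)).
Qed.

Lemma fuse_pruning u i : init_seg st u -> (forall j, (j <= i)%N -> fuse u j u) ->
  above_stem u i -> pruning i (fuse u i) (prefix u i.+1) (fuse u i.+1).
Proof.
move=> stu fu abi; have [w aw w_st] := fuse_alpha stu (fun j ji => fu j (ltnW ji)).
rewrite /= asboolT //; apply: pruneP.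
exact: fuse_prunable stu (fu i (leqnn i)) abi aw w_st.
Qed.

Definition fusion : set (set nat) :=
  [set u | (init_seg st u \/ init_seg u st) /\ forall i, fuse u i u].

Lemma fusion_stem : fusion st.
Proof.
split; first by left; apply: init_seg_refl.
by move=> i; rewrite fuse_stem; case: (fuse0_alpha st) => _ [].
Qed.

Lemma fusion_sub : fusion `<=` T.
Proof. by move=> u [_ /(_ 0%N) /fuse_sub_tree]. Qed.

Lemma finite_fusion u : fusion u -> finite_set u.
Proof. by move=> /fusion_sub; case: treeT => _ + _; apply. Qed.

Lemma fusion_tree : is_tree fusion.
Proof.
split; [by exists st; apply: fusion_stem | exact: finite_fusion |].
move=> v u [cu fu] [j ev]; rewrite -/(prefix u j) in ev; rewrite ev; split.
  case: cu => [stu|ust]; last by right; apply: init_seg_trans (init_seg_prefix u j) ust.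
  exact: init_seg_total stu (init_seg_prefix u j).
have [_ _ closF] := fuse_tree u j.
move=> i; case: (leqP i j) => ij.
  rewrite fuse_prefix //; have [_ _ closFi] := fuse_tree u i.
  exact: closFi (fu i) (init_seg_prefix u j).
rewrite (@fuse_bounded _ j i); [|by move=> x [] | exact: ltnW].
by rewrite fuse_prefix //; apply: closF (fu j) (init_seg_prefix u j).
Qed.

Lemma fusion_setU1 s N a : fusion s -> init_seg st s -> (forall x, s x -> (x < N)%N) ->
  fuse s N (s `|` [set a]) -> (N <= a)%N -> fusion (s `|` [set a]).
Proof.
move=> [_ fs] sts sN fsa Na.
set u := s `|` [set a].
have fins := finite_fusion (conj (or_introl sts) fs).
have su : init_seg s u := init_seg_setU1 (init_seg_refl fins) sN Na.
have stu := init_seg_trans sts su.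
have pu i : (i <= a)%N -> prefix u i = prefix s i.
  move=> ia; apply/seteqP; split => x /=; last by case=> sx xi; split => //; left.
  by case=> -[sx|->] xi //; move: (leq_trans xi ia); rewrite ltnn.
have fu_low i : (i <= a)%N -> fuse u i u.
  move=> ia; rewrite (eq_fuse (pu i ia)).
  case: (leqP i N) => iN; first exact: fuse_sub iN _ fsa.
  by rewrite (fuse_bounded sN (ltnW iN)).
have aba : above_stem u a.
  split; first by right.
  rewrite pu // => x stx; split; first exact: init_seg_sub sts _ stx.
  exact: leq_trans (sN x (init_seg_sub sts stx)) Na.
have ua x : u x -> (x < a.+1)%N.
  by case=> [/sN xN|->//]; apply/ltnW/(leq_trans xN Na).
have [[_ [fua _ _] _ _] _ _] := fuse_pruning stu fu_low aba.
rewrite prefix_id // in fua.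
split; first by left.
move=> i; case: (leqP i a) => ia; first exact: fu_low.
by rewrite (fuse_bounded ua ia).
Qed.

Lemma fusion_alpha : alpha_tree_stem U phi fusion st.
Proof.
apply: (alpha_tree_stem_intro hU hphi fusion_tree fusion_stem); first by move=> t [].
move=> s [[cs fs] sts].
have fins := finite_fusion (conj cs fs).
have [N sN] := finite_bounded fins.
have [w aw w_st] := fuse_alpha (i := N) sts (fun j _ => fs j).
have ws : init_seg w s by case: w_st => [->//|]; rewrite prefix_id.
have [_ _ _ succ] := aw.
have UA := ultraI hU (succ s (conj (fs N) ws)) (nonstandard_ge hU N (hphi fins)).
apply: ultraS hU _ _ _ UA => k [fk Nk].
exact: fusion_setU1 (conj cs fs) sts sN fk Nk.
Qed.

Lemma fusion_body : body fusion `&` \bigcup_n F n = set0.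
Proof.
apply/seteqP; split => // X [[infX bX] [n _ FnX]].
have [M stM] := finite_bounded finite_stem.
have fX m : fusion (prefix X m) := bX _ (finite_prefix X m) (init_seg_prefix X m).
have stX : init_seg st X.
  have [x [Xx Mx]] := infinite_unbounded M infX.
  case: (fX x.+1) => -[stx|xst] _; first exact: init_seg_trans stx (init_seg_prefix X x.+1).
  have /stM : st x by apply: (init_seg_sub xst); split.
  by rewrite ltnNge Mx.
have [i [Xi]] := infinite_unbounded (maxn n M) infX.
rewrite geq_max => /andP[ni Mi].
have st_i y : st y -> (y < i)%N by move/stM => yM; apply: leq_trans yM Mi.
have stX' : init_seg st (prefix X i.+1).
  apply: (init_seg_of_sub stX (init_seg_prefix X i.+1)) => y sty.
  by split; [apply: init_seg_sub stX y sty | apply/ltnW/st_i].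
have [_ fXi] := fX i.+1.
have abi : above_stem (prefix X i.+1) i.
  split; first by split.
  by move=> y sty; split; [apply: init_seg_sub stX' y sty | apply: st_i].
have [_ _ avoid] := fuse_pruning stX' (fun j _ => fXi j) abi.
have : (body (fuse (prefix X i.+1) i.+1) `&` partial_union i) X.
  split; last by exists n.
  split => // p _ [m pm]; rewrite -/(prefix X m) in pm; rewrite pm.
  have [_ _ closF] := fuse_tree (prefix X i.+1) i.+1.
  case: (leqP m i.+1) => mi; first exact: closF (fXi i.+1) (init_seg_prefix_le X mi).
  have [_ fXm] := fX m.
  by move: (fXm i.+1); rewrite fuse_prefix ?(ltnW mi) // fuse_prefix.
by rewrite avoid.
Qed.

End FusionTree.

Lemma alpha_null_bigcup : alpha_ramsey_null U phi (\bigcup_n F n).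
Proof.
move=> T st aT; exists (fusion T st); split.
- exact: fusion_alpha.
- exact: fusion_sub.
- exact: fusion_body.
Qed.

End Fusion.

Theorem mainTheorem15 (U : set (set nat)) (phi : set nat -> nat -> nat) :
  ultrafilter_on_nat U -> nonprincipal U ->
  (forall s : set nat, finite_set s -> nonstandard U (phi s)) ->
  [/\ alpha_ramsey_null U phi set0,
      (forall X Y : set (set nat), X `<=` [set Z | infinite_set Z] ->
         Y `<=` X -> alpha_ramsey_null U phi X -> alpha_ramsey_null U phi Y) &
      (forall F : nat -> set (set nat),
         (forall n, F n `<=` [set Z | infinite_set Z]) ->
         (forall n, alpha_ramsey_null U phi (F n)) ->
         alpha_ramsey_null U phi (\bigcup_n F n))].
Proof.
(* Nonprincipality follows from nonstandardness, and the sets in the ideal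
   need not consist of infinite sets for the argument. *)
move=> hU _ hphi; split.
- exact: alpha_null_set0.
- by move=> X Y _; apply: alpha_null_sub.
- by move=> F _; apply: alpha_null_bigcup.
Qed.
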